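(* Let $2\le k\le d$ and let $P\subset\mathbb{R}^d$ be a finite point set with properties $a_1,\dots,a_k\colon P\to\{-1,1\}$, each strictly linearly separable on $P$, such that all $2^k$ possible labels occur in $P$. For $i=2,\dots,k$ let $H_i$ be a hyperplane strictly separating $P^i_-$ from $P^i_+$, with normal vector $v_i$. Assume general position in the following sense: $v_2,\dots,v_k$ are linearly independent; any at most $d+1$ points of $P$ are affinely independent; and, writing $T$ for the orthogonal projection of $\mathbb{R}^d$ onto $A=\mathrm{span}(v_2,\dots,v_k)$, the images under $T$ of any at most $k$ points of $P$ are affinely independent. Then there is a unit vector $w$ with $w\cdot v_i=0$ for all $i=2,\dots,k$ (a separation preserving projection) such that, after projecting along $w$, the sets $P'_-$ and $P'_+$ are not strictly linearly separable.
   Context: For a finite $P\subset\mathbb{R}^d$ with properties $a_i\colon P\to\{-1,1\}$, write $P^i_{\pm}=\{p\in P: a_i(p)=\pm1\}$ and $P_\pm=P^1_\pm$. The label of $p$ is $(a_1(p),\dots,a_k(p))$. Projection along a unit vector $w$: $p'=p-(p\cdot w)w\in w^\perp$; $X'$ is the image of $X$. Two finite sets $X,Y$ in a linear subspace $L$ are strictly linearly separable (in $L$) if there exist a unit $v\in L$ and $c$ with $v\cdot x<c<v\cdot y$ for all $x\in X,y\in Y$; for projected sets $L=w^\perp$. A property $a_i$ is strictly linearly separable on $P$ if $P^i_-$ and $P^i_+$ are. A projection along $w$ is called separation preserving (with respect to the fixed hyperplanes $H_2,\dots,H_k$) if $w$ is orthogonal to all normals $v_2,\dots,v_k$. *)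

From mathcomp Require Import all_boot all_order all_algebra.
From mathcomp Require Import reals.
Set Implicit Arguments. Unset Strict Implicit. Unset Printing Implicit Defensive.
Import Order.TTheory GRing.Theory Num.Theory.
Local Open Scope ring_scope.

Section Defs.
Variables (R : realType) (d : nat).
Notation pt := 'rV[R]_d.

Definition dot (u v : pt) : R := \sum_(j < d) u 0 j * v 0 j.

Definition proj_along (w p : pt) : pt := p - (dot p w) *: w.

Definition strictly_lin_sep_in (L : pt -> Prop) (X Y : seq pt) : Prop :=
  exists (v : pt) (c : R), L v /\ dot v v = 1 /\
    (forall x, x \in X -> dot v x < c) /\ (forall y, y \in Y -> c < dot v y).

(* the sets P^i_- and P^i_+ (label false = -1, true = +1) *)
Definition Pminus (a : pt -> bool) (P : seq pt) : seq pt := [seq p <- P | ~~ a p].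
Definition Pplus  (a : pt -> bool) (P : seq pt) : seq pt := [seq p <- P | a p].

Definition hyperplane_strictly_separates (v : pt) (c : R) (X Y : seq pt) : Prop :=
  ((forall x, x \in X -> dot v x < c) /\ (forall y, y \in Y -> c < dot v y)) \/
  ((forall x, x \in X -> c < dot v x) /\ (forall y, y \in Y -> dot v y < c)).

(* affine independence of a finite list of points (this forces the points to be distinct) *)
Definition affinely_independent (s : seq pt) : Prop :=
  forall lam : nat -> R,
    \sum_(j < size s) lam j = 0 ->
    \sum_(j < size s) lam j *: s`_j = 0 ->
    forall j, (j < size s)%N -> lam j = 0.

Definition lin_indep_2k (k : nat) (v : nat -> pt) : Prop :=
  forall lam : nat -> R,
    \sum_(2 <= i < k.+1) lam i *: v i = 0 ->
    forall i, (2 <= i <= k)%N -> lam i = 0.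

Definition in_span_2k (k : nat) (v : nat -> pt) (x : pt) : Prop :=
  exists lam : nat -> R, x = \sum_(2 <= i < k.+1) lam i *: v i.

Definition is_orth_proj_onto_span (k : nat) (v : nat -> pt) (T : pt -> pt) : Prop :=
  forall x, in_span_2k k v (T x) /\
            (forall y, in_span_2k k v y -> dot (x - T x) y = 0).

End Defs.

From mathcomp Require Import all_boot all_order all_algebra.
From mathcomp Require Import reals.
From mathcomp Require Import ring lra zify.
Import Order.TTheory GRing.Theory Num.Theory.
Local Open Scope ring_scope.

(* Write P_b for the points of P with a_1 = b.  Because all 2^k
   labels occur, P_b realises every sign pattern of the k-1 affine functions
   f_i = ±(v_i . x - c_i) (oriented so that f_i > 0 exactly on P^i_+).  A
   convexity argument, by induction on the number of functions, then yields a
   point x_b in the convex hull of P_b lying on all hyperplanes H_2..H_k.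
   Since a_1 separates P_- from P_+, their hulls are disjoint, so x_+ <> x_-;
   let w be the unit vector along x_+ - x_-.  Then w . v_i = 0 for i >= 2, and
   projecting along w maps x_- and x_+ to the same point, so no hyperplane of
   w^perp can separate the projected hulls, hence not P'_- from P'_+. *)

Set Implicit Arguments. Unset Strict Implicit.

Section ConvexGeometry.
Variables (R : realType) (d : nat).
Notation pt := 'rV[R]_d.

Lemma dot_comb (u x y : pt) (s t : R) :
  dot u (s *: x + t *: y) = s * dot u x + t * dot u y.
Proof.
rewrite /dot !mulr_sumr -big_split; apply: eq_bigr => j _; rewrite !mxE /=; ring.
Qed.

Lemma dotC (u x : pt) : dot u x = dot x u.
Proof. by rewrite /dot; apply: eq_bigr => j _; rewrite mulrC. Qed.

Lemma dotBr (u x y : pt) : dot u (x - y) = dot u x - dot u y.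
Proof. by rewrite /dot -sumrB; apply: eq_bigr => j _; rewrite !mxE /=; ring. Qed.

Lemma dotZr (u x : pt) (s : R) : dot u (s *: x) = s * dot u x.
Proof. by rewrite /dot mulr_sumr; apply: eq_bigr => j _; rewrite !mxE /=; ring. Qed.

Lemma dot_ge0 (z : pt) : 0 <= dot z z.
Proof. by apply: sumr_ge0 => i _; rewrite -expr2 sqr_ge0. Qed.

Lemma dot_eq0 (z : pt) : dot z z = 0 -> z = 0.
Proof.
move=> z0; apply/rowP => j.
have sq_ge0 (i : 'I_d) : true -> 0 <= z 0 i * z 0 i by rewrite -expr2 sqr_ge0.
have /eqP := psumr_eq0P sq_ge0 z0 (i := j) isT.
by rewrite mulf_eq0 orbb mxE => /eqP.
Qed.

Lemma unit_rescale (z : pt) :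
  0 < dot z z -> dot ((Num.sqrt (dot z z))^-1 *: z) ((Num.sqrt (dot z z))^-1 *: z) = 1.
Proof.
move=> zz; have s2 : Num.sqrt (dot z z) ^+ 2 = dot z z by rewrite sqr_sqrtr // ltW.
have s0 : 0 < Num.sqrt (dot z z) by rewrite sqrtr_gt0.
rewrite dotZr dotC dotZr; move: s2 s0; set s := Num.sqrt _ => s2 s0.
by rewrite -s2; field; lra.
Qed.

Lemma dot_proj_along (u w p : pt) :
  dot u w = 0 -> dot u (proj_along w p) = dot u p.
Proof. by move=> uw; rewrite /proj_along dotBr dotZr uw mulr0 subr0. Qed.

Definition affine (f : pt -> R) : Prop :=
  forall x y t, f ((1 - t) *: x + t *: y) = (1 - t) * f x + t * f y.

Lemma affine_dot (u : pt) (c s : R) : affine (fun x => s * (dot u x - c)).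
Proof. by move=> x y t; rewrite dot_comb; ring. Qed.

Inductive hull (Q : pt -> Prop) : pt -> Prop :=
| hull_pt x : Q x -> hull Q x
| hull_mix x y t : hull Q x -> hull Q y -> 0 <= t -> t <= 1 ->
    hull Q ((1 - t) *: x + t *: y).

Lemma hull_mono (Q Q' : pt -> Prop) :
  (forall x, Q x -> Q' x) -> forall x, hull Q x -> hull Q' x.
Proof.
move=> QQ' x; elim=> [y /QQ'|]; first exact: hull_pt.
by move=> *; apply: hull_mix.
Qed.

Lemma hull_pos (f : pt -> R) (Q : pt -> Prop) :
  affine f -> (forall x, Q x -> 0 < f x) -> forall x, hull Q x -> 0 < f x.
Proof.
move=> faff fQ x; elim=> [y /fQ //|x1 y1 t _ f1 _ f2 t0 t1].
by rewrite faff; nra.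
Qed.

Lemma hull_lt (Q : pt -> Prop) (u : pt) (c : R) :
  (forall x, Q x -> dot u x < c) -> forall x, hull Q x -> dot u x < c.
Proof.
move=> uQ x /(hull_pos (affine_dot u c (-1))) => hx.
suff: 0 < -1 * (dot u x - c) by lra.
by apply: hx => y /uQ; lra.
Qed.

Lemma hull_gt (Q : pt -> Prop) (u : pt) (c : R) :
  (forall x, Q x -> c < dot u x) -> forall x, hull Q x -> c < dot u x.
Proof.
move=> uQ x /(hull_pos (affine_dot u c 1)) => hx.
suff: 0 < 1 * (dot u x - c) by lra.
by apply: hx => y /uQ; lra.
Qed.

Lemma affine_crossing (f : pt -> R) (x y : pt) :
  affine f -> 0 < f x -> f y < 0 ->
  exists2 t, 0 <= t <= 1 & f ((1 - t) *: x + t *: y) = 0.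
Proof.
move=> faff fx fy; exists (f x / (f x - f y)).
  by rewrite divr_ge0 ?ler_pdivrMr /=; lra.
by rewrite faff; field; lra.
Qed.

(* Induction on I: the hulls of the parts of Q where f_i is positive resp.
   negative each contain a common zero of the remaining functions, and the
   segment joining them crosses the zero set of f_i. *)
Lemma hull_common_zero (f : nat -> pt -> R) (I : seq nat) (Q : pt -> Prop) :
  uniq I -> (forall i, affine (f i)) ->
  (forall lab : nat -> bool, exists2 p, Q p &
     forall i, i \in I -> if lab i then 0 < f i p else f i p < 0) ->
  exists2 x, hull Q x & forall i, i \in I -> f i x = 0.
Proof.
move=> + faff; elim: I Q => [|j I IH] Q.
  by move=> _ patterns; have [p Qp _] := patterns xpred0; exists p => //; apply: hull_pt.
case/andP=> jI Iuniq patterns.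
(* The part of Q on either side of the zero set of f_j realises all sign
   patterns of the remaining functions, since j does not occur in I. *)
have side (b : bool) : exists2 x, hull (fun p => Q p /\ (if b then 0 < f j p else f j p < 0)) x
    & forall i, i \in I -> f i x = 0.
  apply: IH => // lab; have [p Qp sgn] := patterns (fun i => if i == j then b else lab i).
  exists p; first by split=> //; have := sgn j; rewrite mem_head eqxx; apply.
  move=> i iI; have := sgn i; rewrite inE iI orbT; case: eqP => [ij|_]; last by apply.
  by move: jI; rewrite -ij iI.
have [xp hxp zp] := side true; have [xm hxm zm] := side false.
have fxp : 0 < f j xp by apply: (hull_pos (faff j) _ hxp) => ? [].
have fxm : 0 < -1 * f j xm.
  apply: (hull_pos (f := fun x => -1 * f j x) _ _ hxm) => [x y t|? [_]]; last lra.
  by rewrite (faff j); ring.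
have [t t01 fz] := affine_crossing (faff j) fxp ltac:(lra).
exists ((1 - t) *: xp + t *: xm).
  case/andP: t01 => t0 t1; apply: hull_mix => //.
    by apply: hull_mono hxp => ? [].
  by apply: hull_mono hxm => ? [].
move=> i; rewrite inE => /orP[/eqP->//|iI].
by rewrite faff zp // zm //; ring.
Qed.

(* Orienting a separating hyperplane with a reference point q of P^-: the
   resulting affine function is positive on P^+ and negative on P^-. *)
Definition oriented (v q : pt) (c : R) (p : pt) : R :=
  (if dot v q < c then 1 else -1) * (dot v p - c).

Lemma oriented_sign (a : pt -> bool) (P : seq pt) (v q : pt) (c : R) :
  hyperplane_strictly_separates v c (Pminus a P) (Pplus a P) ->
  q \in Pminus a P ->
  forall p, p \in P -> if a p then 0 < oriented v q c p else oriented v q c p < 0.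
Proof.
move=> sep qm p pP; rewrite /oriented.
case: sep => [[minus_lt plus_gt]|[minus_gt plus_lt]].
  rewrite (minus_lt q qm); case apE: (a p).
    by have := plus_gt p; rewrite mem_filter apE pP => /(_ isT); lra.
  by have := minus_lt p; rewrite mem_filter apE pP => /(_ isT); lra.
have -> : (dot v q < c) = false by apply/negbTE; rewrite -leNgt ltW // minus_gt.
case apE: (a p).
  by have := plus_lt p; rewrite mem_filter apE pP => /(_ isT); lra.
by have := minus_gt p; rewrite mem_filter apE pP => /(_ isT); lra.
Qed.

Lemma Pminus_label (a : pt -> bool) (P : seq pt) :
  Pminus a P = [seq p <- P | a p == false].
Proof. by apply: eq_filter => p; case: (a p). Qed.

Lemma Pplus_label (a : pt -> bool) (P : seq pt) :
  Pplus a P = [seq p <- P | a p == true].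
Proof. by apply: eq_filter => p; case: (a p). Qed.

Lemma merged_not_separable (w xm xp : pt) (s : R) (X Y : seq pt) :
  xp - xm = s *: w -> hull (fun p => p \in X) xm -> hull (fun p => p \in Y) xp ->
  ~ strictly_lin_sep_in (fun u => dot u w = 0)
      (map (proj_along w) X) (map (proj_along w) Y).
Proof.
move=> xpm hxm hxp [u [c [uw [_ [lo hi]]]]].
have um : dot u xm < c.
  by apply: (hull_lt _ hxm) => p pX; rewrite -(dot_proj_along p uw); apply/lo/map_f.
have up : c < dot u xp.
  by apply: (hull_gt _ hxp) => p pY; rewrite -(dot_proj_along p uw); apply/hi/map_f.
have : dot u (xp - xm) = 0 by rewrite xpm dotZr uw mulr0.
by rewrite dotBr; lra.
Qed.

End ConvexGeometry.

Section HyperplaneMeeting.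
Variables (R : realType) (d k : nat).
Variables (P : seq 'rV[R]_d) (a : nat -> 'rV[R]_d -> bool).
Variables (v : nat -> 'rV[R]_d) (c : nat -> R) (q : 'rV[R]_d).
Hypothesis k_pos : (0 < k)%N.
Hypothesis all_labels : forall lab : nat -> bool, exists2 p, p \in P &
  forall i, (1 <= i <= k)%N -> a i p = lab i.
Hypothesis separates : forall i, (2 <= i <= k)%N ->
  hyperplane_strictly_separates (v i) (c i) (Pminus (a i) P) (Pplus (a i) P).
Hypothesis q_minus : forall i, (2 <= i <= k)%N -> q \in Pminus (a i) P.

(* For either value b of a_1, the hull of the points labelled b by a_1 meets
   the intersection of the hyperplanes H_2, ..., H_k: the points labelled b
   realise all sign patterns of the oriented H_i. *)
Lemma hull_meets_hyperplanes (b : bool) :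
  exists2 x, hull (fun p => p \in [seq p <- P | a 1%N p == b]) x &
    forall i, (2 <= i <= k)%N -> dot (v i) x = c i.
Proof.
have [|x hx zero] := @hull_common_zero _ _ (fun i => oriented (v i) q (c i))
    (iota 2 (k - 1)) (fun p => p \in [seq p <- P | a 1%N p == b]) (iota_uniq _ _)
    (fun i => affine_dot _ _ _).
  move=> lab; have [p pP pa] := all_labels (fun i => if i == 1%N then b else lab i).
  exists p; first by rewrite mem_filter pP pa ?eqxx //; lia.
  move=> i; rewrite mem_iota => irange; have irange' : (2 <= i <= k)%N by lia.
  have i_ne1 : (i == 1%N) = false by apply/eqP; lia.
  by have := oriented_sign (separates irange') (q_minus irange') pP; rewrite pa ?i_ne1 //; lia.
exists x => // i irange; have := zero i; rewrite mem_iota /oriented.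
by case: ifP => _ /(_ ltac:(lia)); lra.
Qed.

End HyperplaneMeeting.

Theorem mainTheorem3 (R : realType) (d k : nat)
  (P : seq 'rV[R]_d) (a : nat -> 'rV[R]_d -> bool)
  (v : nat -> 'rV[R]_d) (c : nat -> R) :
  (2 <= k <= d)%N ->
  uniq P ->
  (* each property a_i (1 <= i <= k) is strictly linearly separable on P *)
  (forall i, (1 <= i <= k)%N ->
     strictly_lin_sep_in (fun _ => True) (Pminus (a i) P) (Pplus (a i) P)) ->
  (* all 2^k labels occur in P *)
  (forall lab : nat -> bool, exists2 p, p \in P &
     forall i, (1 <= i <= k)%N -> a i p = lab i) ->
  (* H_i = {x | v_i . x = c_i} strictly separates P^i_- from P^i_+, i = 2..k *)
  (forall i, (2 <= i <= k)%N ->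
     hyperplane_strictly_separates (v i) (c i) (Pminus (a i) P) (Pplus (a i) P)) ->
  (* general position *)
  lin_indep_2k k v ->
  (forall s : seq 'rV[R]_d, uniq s -> {subset s <= P} -> (size s <= d.+1)%N ->
     affinely_independent s) ->
  (forall T : 'rV[R]_d -> 'rV[R]_d, is_orth_proj_onto_span k v T ->
     forall s : seq 'rV[R]_d, uniq s -> {subset s <= P} -> (size s <= k)%N ->
       affinely_independent (map T s)) ->
  exists w : 'rV[R]_d,
    dot w w = 1 /\
    (forall i, (2 <= i <= k)%N -> dot w (v i) = 0) /\
    ~ strictly_lin_sep_in (fun u => dot u w = 0)
        (map (proj_along w) (Pminus (a 1%N) P))
        (map (proj_along w) (Pplus (a 1%N) P)).
Proof.
move=> /andP[k2 kd] _ sep1 all_labels separates _ _ _.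
have [q qP qa] := all_labels (fun _ => false).
have q_minus i : (2 <= i <= k)%N -> q \in Pminus (a i) P.
  by move=> irange; rewrite mem_filter qP qa //; lia.
have k_pos : (0 < k)%N by lia.
have [xm hxm on_m] := hull_meets_hyperplanes k_pos all_labels separates q_minus false.
have [xp hxp on_p] := hull_meets_hyperplanes k_pos all_labels separates q_minus true.
rewrite -Pminus_label in hxm; rewrite -Pplus_label in hxp.
have [u [c1 [_ [_ [lo hi]]]]] := sep1 1%N ltac:(lia).
have u_lt : dot u xm < dot u xp by have := hull_lt lo hxm; have := hull_gt hi hxp; lra.
set z := xp - xm; have zz : 0 < dot z z.
  rewrite lt_def dot_ge0 andbT; apply/eqP => /dot_eq0/subr0_eq xpm.
  by move: u_lt; rewrite xpm ltxx.
set s := Num.sqrt (dot z z); have s0 : s != 0 by rewrite gt_eqF // sqrtr_gt0.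
exists (s^-1 *: z); split; [exact: unit_rescale | split].
  by move=> i irange; rewrite dotC dotZr /z dotBr on_p // on_m // subrr mulr0.
by apply: (merged_not_separable (s := s) _ hxm hxp); rewrite scalerA divff // scale1r.
Qed.
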